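(* Let $N=\{1,\dots,n\}$, $n\ge2$, be a parallel-link network with unit demand and affine latencies $\ell_i(x_i)=a_ix_i+b_i$, $a_i>0$, $b_i\ge0$, with $x_i(0)>0$ for all $i\in N$. For $c\in\mathbb{R}_+$ let $t(c)$ be the unique element of $\mathcal{T}(c)$, $x(c)=x(t(c))$, and $A(c)=\{i\in N: t_i(c)=c\}$. Then there exist an integer $1\le j\le n$, numbers $c_1>c_2>\dots>c_j>0$, and sets $\emptyset=A_0\subsetneq A_1\subsetneq\dots\subsetneq A_j=N$ such that, with $c_0=\infty$: $A(c)=A_k$ for all $c\in(c_{k+1},c_k]\cap\mathbb{R}_+$, $k=0,\dots,j-1$, and $A(c)=N$ for all $c\in[0,c_j]$. Moreover, on each of the intervals $[c_1,\infty)$, $[c_{k+1},c_k]$ ($k=1,\dots,j-1$) and $[0,c_j]$, the map $c\mapsto x(c)$ is affine and $c\mapsto C(x(c))$ is a polynomial of degree at most $2$ in $c$; on $[c_1,\infty)$ and on $[0,c_j]$ the flow $x(c)$ is constant (on $[0,c_j]$ it equals $x(0)$). In particular $\min_{c\in\mathbb{R}_+}C(x(c))$ is attained.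
   Context: Parallel links $N$, one unit of flow; flows $x\in\mathbb{R}^N_+$ with $\sum_ix_i=1$; total latency cost $C(x)=\sum_{i\in N}\ell_i(x_i)x_i$. For tolls $t\in\mathbb{R}^N_+$, $x(t)$ is the unique Wardrop equilibrium for $t$ (for all $i,j$ with $x_i>0$: $\ell_i(x_i)+t_i\le\ell_j(x_j)+t_j$); $x(0)$ is the untolled one. Profit $\Pi_i(t)=t_ix_i(t)$. $\mathcal{T}(c)$: toll vectors $t$ with $0\le t_i\le c$ for all $i$ such that for every $i$ and $t'_i\in[0,c]$, $\Pi_i(t_i,t_{-i})\ge\Pi_i(t'_i,t_{-i})$ (flow recomputed). Under the hypotheses, $\mathcal{T}(c)$ is a singleton for every $c\in\mathbb{R}_+$. *)

(* classical reals. Links are indexed by 0..n-1 (i.e. N = {1..n}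
   shifted); vectors over links are functions nat -> R, only indices i < n matter. *)
From Stdlib Require Import Reals.
Open Scope R_scope.

Definition lat (a b : nat -> R) (i : nat) (y : R) : R := a i * y + b i.

Fixpoint sumN (n : nat) (f : nat -> R) : R :=
  match n with O => 0 | S m => sumN m f + f m end.

Definition feasible (n : nat) (x : nat -> R) : Prop :=
  (forall i, (i < n)%nat -> 0 <= x i) /\ sumN n x = 1.

Definition wardrop (n : nat) (a b t x : nat -> R) : Prop :=
  feasible n x /\
  forall i j, (i < n)%nat -> (j < n)%nat -> 0 < x i ->
    lat a b i (x i) + t i <= lat a b j (x j) + t j.

Definition cost (n : nat) (a b x : nat -> R) : R :=
  sumN n (fun i => lat a b i (x i) * x i).

Definition nonneg_tolls (n : nat) (t : nat -> R) : Prop :=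
  forall i, (i < n)%nat -> 0 <= t i.

(* X is the map t |-> x(t): X t is (on the links) the unique Wardrop equilibrium *)
Definition is_eq_map (n : nat) (a b : nat -> R) (X : (nat -> R) -> (nat -> R)) : Prop :=
  forall t, nonneg_tolls n t ->
    forall y, wardrop n a b t y <-> (forall i, (i < n)%nat -> y i = X t i).

Definition upd (t : nat -> R) (i : nat) (s : R) : nat -> R :=
  fun k => if Nat.eqb k i then s else t k.

Definition profit (X : (nat -> R) -> (nat -> R)) (t : nat -> R) (i : nat) : R :=
  t i * X t i.

Definition inT (n : nat) (X : (nat -> R) -> (nat -> R)) (c : R) (t : nat -> R) : Prop :=
  (forall i, (i < n)%nat -> 0 <= t i <= c) /\
  forall i, (i < n)%nat -> forall s, 0 <= s <= c ->
    profit X t i >= profit X (upd t i s) i.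

(* Every toll equilibrium [t(c)] keeps all links in use, and moving link [i]'s own toll by [h]
   moves its flow by [- g_i h] with [g_i = (1/a_i) (1 - 1/(a_i sum_k 1/a_k))]; profit maximisation
   then forces [t_i(c) = min(c, x_i(c) / g_i)]. The common level [L(c)] of latency plus toll is
   nondecreasing and 1-Lipschitz in [c], so link [i] is capped exactly while
   [L(c) - (1 + a_i g_i) c - b_i >= 0], i.e. on an interval [[0, theta_i]]. Between consecutive
   distinct thresholds the capped set is fixed and the equilibrium conditions form a linear system
   in [c]: the flows are affine and the cost is quadratic. A function that is quadratic on finitely
   many compact pieces and constant beyond them attains its minimum. *)

From Stdlib Require Import Reals Lra Lia Psatz List Wf_nat.
Open Scope R_scope.

Lemma sumN_ext n f g : (forall k, (k < n)%nat -> f k = g k) -> sumN n f = sumN n g.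
Proof.
  induction n as [|n IH]; intros H; simpl; [reflexivity|].
  rewrite IH by (intros; apply H; lia). rewrite (H n) by lia. reflexivity.
Qed.

Lemma sumN_add n f g : sumN n (fun k => f k + g k) = sumN n f + sumN n g.
Proof. induction n as [|n IH]; simpl; [lra|]. rewrite IH. lra. Qed.

Lemma sumN_scal n c f : sumN n (fun k => c * f k) = c * sumN n f.
Proof. induction n as [|n IH]; simpl; [lra|]. rewrite IH. lra. Qed.

Lemma sumN_0 n : sumN n (fun _ => 0) = 0.
Proof. induction n as [|n IH]; simpl; [lra|]. rewrite IH. lra. Qed.

Lemma sumN_le n f g : (forall k, (k < n)%nat -> f k <= g k) -> sumN n f <= sumN n g.
Proof.
  induction n as [|n IH]; intros H; simpl; [lra|].
  pose proof (H n ltac:(lia)). enough (sumN n f <= sumN n g) by lra.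
  apply IH. intros; apply H; lia.
Qed.

Lemma sumN_lt n f g i : (forall k, (k < n)%nat -> f k <= g k) -> (i < n)%nat -> f i < g i ->
  sumN n f < sumN n g.
Proof.
  induction n as [|n IH]; intros H Hi Hfg; simpl; [lia|].
  pose proof (H n ltac:(lia)) as Hn.
  destruct (Nat.eq_dec i n) as [->|Hin].
  - enough (sumN n f <= sumN n g) by lra. apply sumN_le. intros; apply H; lia.
  - enough (sumN n f < sumN n g) by lra. apply IH; [intros; apply H; lia | lia | exact Hfg].
Qed.

Lemma sumN_delta n i v : (i < n)%nat -> sumN n (fun k => if Nat.eqb k i then v else 0) = v.
Proof.
  induction n as [|n IH]; intros Hi; simpl; [lia|].
  destruct (Nat.eq_dec i n) as [->|Hin].
  - rewrite Nat.eqb_refl, (sumN_ext n _ (fun _ => 0)), sumN_0; [lra|].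
    intros k Hk. destruct (Nat.eqb_spec k n); [lia|reflexivity].
  - rewrite IH by lia. destruct (Nat.eqb_spec n i); [lia|lra].
Qed.

Lemma sumN_pos n f : (0 < n)%nat -> (forall k, (k < n)%nat -> 0 < f k) -> 0 < sumN n f.
Proof.
  intros Hn H. rewrite <- (sumN_0 n). apply (sumN_lt n _ _ 0%nat); auto.
  intros k Hk. left; auto.
Qed.

Lemma sumN_pos_inv n f : 0 < sumN n f -> exists k, (k < n)%nat /\ 0 < f k.
Proof.
  induction n as [|n IH]; simpl; intros H; [lra|].
  destruct (Rlt_le_dec 0 (f n)) as [Hfn|Hfn]; [exists n; auto|].
  destruct IH as [k [Hk Hfk]]; [lra|]. exists k; auto.
Qed.

Lemma pos_lower_bound n f : (forall k, (k < n)%nat -> 0 < f k) ->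
  exists m, 0 < m /\ forall k, (k < n)%nat -> m <= f k.
Proof.
  induction n as [|n IH]; intros H.
  - exists 1. split; [lra|]. intros; lia.
  - destruct IH as [m [Hm Hmk]]; [intros; apply H; lia|].
    exists (Rmin m (f n)). split; [apply Rmin_glb_lt; auto; apply H; lia|].
    intros k Hk. destruct (Nat.eq_dec k n) as [->|Hkn]; [apply Rmin_r|].
    eapply Rle_trans; [apply Rmin_l|]. apply Hmk; lia.
Qed.

Lemma finite_choice (n : nat) (P : nat -> R -> Prop) :
  (forall i, (i < n)%nat -> exists v, P i v) -> exists f : nat -> R, forall i, (i < n)%nat -> P i (f i).
Proof.
  induction n as [|n IH]; intros H; [exists (fun _ => 0); intros; lia|].
  destruct IH as [f Hf]; [intros; apply H; lia|].
  destruct (H n ltac:(lia)) as [v Hv].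
  exists (fun k => if Nat.eqb k n then v else f k). intros i Hi.
  destruct (Nat.eqb_spec i n) as [->|]; [exact Hv|]. apply Hf; lia.
Qed.

Lemma feasible_not_dominated n x y i : feasible n x -> feasible n y ->
  (forall k, (k < n)%nat -> x k <= y k) -> (i < n)%nat -> x i < y i -> False.
Proof. intros [_ Hx] [_ Hy] Hle Hi Hlt. pose proof (sumN_lt n x y i Hle Hi Hlt). lra. Qed.

Lemma cost_ext n a b x y : (forall i, (i < n)%nat -> x i = y i) -> cost n a b x = cost n a b y.
Proof. intros H. apply sumN_ext. intros k Hk. rewrite H by exact Hk. reflexivity. Qed.

Lemma cost_quadratic_of_affine n a b (P : R -> Prop) (x : R -> nat -> R) :
  (exists u v : nat -> R, forall c, P c -> forall i, (i < n)%nat -> x c i = u i + v i * c) ->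
  exists p q r : R, forall c, P c -> cost n a b (x c) = p + q * c + r * c ^ 2.
Proof.
  intros [u [v Hx]].
  exists (sumN n (fun k => (a k * u k + b k) * u k)),
    (sumN n (fun k => (2 * a k * u k + b k) * v k)),
    (sumN n (fun k => a k * v k * v k)).
  intros c Hc. unfold cost, lat.
  rewrite (sumN_ext n _ (fun k => (a k * u k + b k) * u k
    + c * ((2 * a k * u k + b k) * v k) + c ^ 2 * (a k * v k * v k))).
  - rewrite !sumN_add, !sumN_scal. ring.
  - intros k Hk. rewrite (Hx c Hc k Hk). ring.
Qed.

Lemma Rdiv_le_compat_r u u' g : 0 < g -> u <= u' -> u / g <= u' / g.
Proof. intros Hg Hu. apply Rmult_le_compat_r; [left; apply Rinv_0_lt_compat|]; lra. Qed.

Lemma Rmin_div_le_compat c c' u u' g : 0 < g -> c <= c' -> u <= u' ->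
  Rmin c (u / g) <= Rmin c' (u' / g).
Proof.
  intros Hg Hc Hu. pose proof (Rdiv_le_compat_r u u' g Hg Hu).
  unfold Rmin. destruct (Rle_dec c (u / g)), (Rle_dec c' (u' / g)); lra.
Qed.

Lemma Rmin_div_le_shift c c' u u' g : 0 < g -> c <= c' -> u' <= u ->
  Rmin c' (u' / g) <= Rmin c (u / g) + (c' - c).
Proof.
  intros Hg Hc Hu. pose proof (Rdiv_le_compat_r u' u g Hg Hu).
  unfold Rmin. destruct (Rle_dec c (u / g)), (Rle_dec c' (u' / g)); lra.
Qed.

Lemma Rmult_le_of_le_div x y z : 0 < z -> x <= y / z -> x * z <= y.
Proof.
  intros Hz H. apply (Rmult_le_compat_r z) in H; [|lra].
  unfold Rdiv in H. rewrite Rmult_assoc, Rinv_l, Rmult_1_r in H by lra. exact H.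
Qed.

Lemma le_0_of_forall_small_le q K d : 0 < K -> 0 < d -> (forall h, 0 < h <= d -> q <= K * h) -> q <= 0.
Proof.
  intros HK Hd H. apply Rnot_lt_le. intros Hq.
  set (h := Rmin d (q / (2 * K))).
  assert (Hh : 0 < h <= d) by (split; [apply Rmin_glb_lt; [lra|apply Rdiv_lt_0_compat; lra]|apply Rmin_l]).
  assert (HKh : K * h <= q / 2).
  { replace (q / 2) with (K * (q / (2 * K))) by (field; lra).
    apply Rmult_le_compat_l; [lra|apply Rmin_r]. }
  specialize (H h Hh). lra.
Qed.

Definition inv_slope_sum (n : nat) (a : nat -> R) : R := sumN n (fun k => 1 / a k).

(* [g_i = - d x_i / d t_i] while all links stay in use: the common level rises by
   [d t_i / (a_i S)] with [S = sum_k 1/a_k], and each link [k] gains that amount divided by [a_k]. *)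
Definition toll_sensitivity (n : nat) (a : nat -> R) (i : nat) : R :=
  (1 / a i) * (1 - 1 / (a i * inv_slope_sum n a)).

(* The equilibrium after link [i]'s toll moves by [h], as long as it stays nonnegative. *)
Definition shift_flow (n : nat) (a x : nat -> R) (i : nat) (h : R) (k : nat) : R :=
  x k + h / (a i * inv_slope_sum n a * a k) - (if Nat.eqb k i then h / a i else 0).

Section Slopes.

Variables (n : nat) (a : nat -> R).
Hypothesis Ha : forall i, (i < n)%nat -> 0 < a i.

Lemma inv_slope_sum_gt i : (2 <= n)%nat -> (i < n)%nat -> 1 / a i < inv_slope_sum n a.
Proof.
  intros Hn Hi. set (other := if Nat.eqb i 0 then 1%nat else 0%nat).
  assert (Ho : (other < n)%nat /\ other <> i) by (unfold other; destruct (Nat.eqb_spec i 0); lia).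
  unfold inv_slope_sum. rewrite <- (sumN_delta n i (1 / a i)) by exact Hi.
  apply (sumN_lt n _ _ other); [|tauto|].
  - intros k Hk. destruct (Nat.eqb_spec k i) as [->|]; [lra|].
    left. apply Rdiv_lt_0_compat; [lra|auto].
  - destruct (Nat.eqb_spec other i); [tauto|]. apply Rdiv_lt_0_compat; [lra|apply Ha; tauto].
Qed.

Lemma inv_slope_sum_pos : (0 < n)%nat -> 0 < inv_slope_sum n a.
Proof. intros Hn. apply sumN_pos; auto. intros k Hk. apply Rdiv_lt_0_compat; auto; lra. Qed.

Lemma toll_sensitivity_pos i : (2 <= n)%nat -> (i < n)%nat -> 0 < toll_sensitivity n a i.
Proof.
  intros Hn Hi. pose proof (inv_slope_sum_gt i Hn Hi) as HS. pose proof (Ha i Hi).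
  set (S := inv_slope_sum n a) in HS.
  assert (HaS : 1 < a i * S).
  { replace 1 with (a i * (1 / a i)) by (field; lra). apply Rmult_lt_compat_l; lra. }
  assert (1 / (a i * S) < 1).
  { apply (Rmult_lt_reg_r (a i * S)); [lra|].
    unfold Rdiv. rewrite !Rmult_1_l, Rinv_l by lra. exact HaS. }
  unfold toll_sensitivity. fold S. apply Rmult_lt_0_compat; [apply Rdiv_lt_0_compat|]; lra.
Qed.

Lemma shift_flow_self x i h : (0 < n)%nat -> (i < n)%nat ->
  shift_flow n a x i h i = x i - toll_sensitivity n a i * h.
Proof.
  intros Hn Hi. pose proof (Ha i Hi). pose proof (inv_slope_sum_pos Hn).
  unfold shift_flow, toll_sensitivity. rewrite Nat.eqb_refl. field. lra.
Qed.

Lemma shift_flow_nonneg_near_0 x i : (i < n)%nat -> (forall k, (k < n)%nat -> 0 < x k) ->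
  exists d, 0 < d /\ forall h, Rabs h <= d -> forall k, (k < n)%nat -> 0 <= shift_flow n a x i h k.
Proof.
  intros Hi Hx. pose proof (inv_slope_sum_pos ltac:(lia)) as HS. pose proof (Ha i Hi).
  set (q := fun k => 1 / (a i * inv_slope_sum n a * a k)).
  assert (Hq : forall k, (k < n)%nat -> 0 < q k).
  { intros k Hk. pose proof (Ha k Hk). apply Rdiv_lt_0_compat; [lra|]. repeat apply Rmult_lt_0_compat; lra. }
  assert (Hai : 0 < 1 / a i) by (apply Rdiv_lt_0_compat; lra).
  destruct (pos_lower_bound n (fun k => x k / (q k + 1 / a i))) as [d [Hd Hdk]].
  { intros k Hk. apply Rdiv_lt_0_compat; [auto|]. pose proof (Hq k Hk). lra. }
  exists d. split; [exact Hd|]. intros h Hh k Hk.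
  pose proof (Hq k Hk). specialize (Hdk k Hk). apply Rmult_le_of_le_div in Hdk; [|lra].
  pose proof (Rle_abs h). pose proof (Rle_abs (- h)). rewrite Rabs_Ropp in *.
  assert (Hown : (if Nat.eqb k i then h / a i else 0) <= Rabs h * (1 / a i)).
  { destruct (Nat.eqb k i); [unfold Rdiv; nra|apply Rmult_le_pos; [apply Rabs_pos|lra]]. }
  unfold shift_flow. replace (h / (a i * inv_slope_sum n a * a k)) with (h * q k) by (unfold q, Rdiv; ring).
  nra.
Qed.

End Slopes.

Section Wardrop.

Variables (n : nat) (a b : nat -> R).
Hypothesis Ha : forall i, (i < n)%nat -> 0 < a i.

Lemma wardrop_level_eq tau y i j : wardrop n a b tau y -> (i < n)%nat -> (j < n)%nat ->
  0 < y i -> 0 < y j -> lat a b i (y i) + tau i = lat a b j (y j) + tau j.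
Proof.
  intros [_ Hw] Hi Hj Hyi Hyj.
  pose proof (Hw i j Hi Hj Hyi). pose proof (Hw j i Hj Hi Hyj). lra.
Qed.

Lemma wardrop_tolls_ext tau tau' y : (forall k, (k < n)%nat -> tau k = tau' k) ->
  wardrop n a b tau y -> wardrop n a b tau' y.
Proof. intros He [Hf Hw]. split; [exact Hf|]. intros i j Hi Hj Hy. rewrite <- !He by auto. auto. Qed.

Lemma wardrop_level_le tau tau' y y' i j : wardrop n a b tau y -> wardrop n a b tau' y' ->
  (forall k, (k < n)%nat -> tau' k <= tau k) -> (i < n)%nat -> (j < n)%nat -> 0 < y i -> 0 < y' j ->
  lat a b j (y' j) + tau' j <= lat a b i (y i) + tau i.
Proof.
  intros Hw Hw' Hle Hi Hj Hyi Hy'j. apply Rnot_lt_le. intros Hlt.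
  assert (Hup : forall k, (k < n)%nat -> 0 < y k -> y k < y' k).
  { intros k Hk Hyk.
    pose proof (wardrop_level_eq tau y k i Hw Hk Hi Hyk Hyi).
    pose proof (proj2 Hw' j k Hj Hk Hy'j). pose proof (Hle k Hk). pose proof (Ha k Hk).
    unfold lat in *. nra. }
  apply (feasible_not_dominated n y y' i (proj1 Hw) (proj1 Hw')); auto.
  intros k Hk. destruct (Rlt_le_dec 0 (y k)) as [Hyk|Hyk]; [left; auto|].
  pose proof (proj1 (proj1 Hw') k Hk). lra.
Qed.

Lemma wardrop_shift_flow tau x i h : (i < n)%nat -> wardrop n a b tau x ->
  (forall k, (k < n)%nat -> 0 < x k) -> (forall k, (k < n)%nat -> 0 <= shift_flow n a x i h k) ->
  wardrop n a b (upd tau i (tau i + h)) (shift_flow n a x i h).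
Proof.
  intros Hi Hw Hx Hy. pose proof (inv_slope_sum_pos n a Ha ltac:(lia)) as HS. pose proof (Ha i Hi).
  set (w := h / (a i * inv_slope_sum n a)).
  assert (Hlev : forall k, (k < n)%nat ->
    lat a b k (shift_flow n a x i h k) + upd tau i (tau i + h) k = lat a b k (x k) + tau k + w).
  { intros k Hk. pose proof (Ha k Hk). unfold shift_flow, upd, lat, w.
    destruct (Nat.eqb_spec k i) as [->|]; field; lra. }
  split; [split|].
  - exact Hy.
  - rewrite (sumN_ext n _ (fun k => x k + w * (1 / a k) + -1 * (if Nat.eqb k i then h / a i else 0))).
    + rewrite !sumN_add, !sumN_scal, sumN_delta by exact Hi. fold (inv_slope_sum n a).
      rewrite (proj2 (proj1 Hw)). unfold w. field. lra.
    + intros k Hk. pose proof (Ha k Hk). unfold shift_flow, w. field. lra.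
  - intros k l Hk Hl _. rewrite !Hlev by auto.
    pose proof (wardrop_level_eq tau x k l Hw Hk Hl (Hx k Hk) (Hx l Hl)). lra.
Qed.

End Wardrop.

Lemma lipschitz_continuity f K : (forall x y, Rabs (f x - f y) <= K * Rabs (x - y)) -> continuity f.
Proof.
  intros Hl x0 eps Heps. exists (eps / (Rabs K + 1)).
  assert (HK : 0 < Rabs K + 1) by (pose proof (Rabs_pos K); lra).
  split; [apply Rdiv_lt_0_compat; lra|]. intros x [_ Hx]. simpl in *. unfold R_dist in *.
  eapply Rle_lt_trans; [apply Hl|].
  apply (Rmult_lt_compat_l (Rabs K + 1)) in Hx; [|lra].
  replace ((Rabs K + 1) * (eps / (Rabs K + 1))) with eps in Hx by (field; lra).
  pose proof (Rle_abs K). pose proof (Rabs_pos (x - x0)). nra.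
Qed.

Lemma Rmax_0_lipschitz x y : Rabs (Rmax 0 x - Rmax 0 y) <= Rabs (x - y).
Proof.
  pose proof (Rle_abs (x - y)). pose proof (Rle_abs (- (x - y))). rewrite Rabs_Ropp in *.
  apply Rabs_le. unfold Rmax. destruct (Rle_dec 0 x), (Rle_dec 0 y); lra.
Qed.

Lemma positive_root_of_slope_bounds (D : R -> R) K1 K2 : 0 < K1 ->
  (forall c c', 0 <= c -> c <= c' -> - K2 * (c' - c) <= D c' - D c <= - K1 * (c' - c)) ->
  0 < D 0 -> exists z, 0 < z /\ D z = 0.
Proof.
  intros HK1 Hsl HD0.
  assert (Hlip : forall p q, 0 <= p -> 0 <= q -> Rabs (D p - D q) <= K2 * Rabs (p - q)).
  { intros p q Hp Hq. destruct (Rle_dec p q) as [Hpq|Hpq].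
    - pose proof (Hsl p q Hp Hpq). rewrite (Rabs_minus_sym p q), (Rabs_pos_eq (q - p)) by lra.
      apply Rabs_le. split; nra.
    - pose proof (Hsl q p Hq ltac:(lra)). rewrite (Rabs_pos_eq (p - q)) by lra. apply Rabs_le. split; nra. }
  assert (HK2 : 0 <= K2) by (pose proof (Hsl 0 1 (Rle_refl 0) Rle_0_1); lra).
  set (f := fun c => - D (Rmax 0 c)).
  assert (Hcont : continuity f).
  { apply (lipschitz_continuity f K2). intros x y. unfold f.
    replace (- D (Rmax 0 x) - - D (Rmax 0 y)) with (- (D (Rmax 0 x) - D (Rmax 0 y))) by ring.
    rewrite Rabs_Ropp. eapply Rle_trans; [apply Hlip; apply Rmax_l|].
    apply Rmult_le_compat_l; [exact HK2|apply Rmax_0_lipschitz]. }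
  set (y := D 0 / K1 + 1).
  assert (Hy : 0 < y) by (unfold y; assert (0 < D 0 / K1) by (apply Rdiv_lt_0_compat; lra); lra).
  assert (Hf0 : f 0 < 0) by (unfold f; rewrite Rmax_left by lra; lra).
  assert (Hfy : 0 < f y).
  { unfold f. rewrite Rmax_right by lra. pose proof (Hsl 0 y (Rle_refl 0) ltac:(lra)).
    assert (K1 * y = D 0 + K1) by (unfold y; field; lra). nra. }
  destruct (IVT f 0 y Hcont Hy Hf0 Hfy) as [z [[Hz0 Hzy] Hfz]].
  unfold f in Hfz. rewrite Rmax_right in Hfz by lra.
  exists z. split; [|lra]. destruct Hz0 as [|<-]; [assumption|lra].
Qed.

Lemma quadratic_attains_min p q r lo hi : lo <= hi -> exists m, lo <= m <= hi /\
  forall c, lo <= c <= hi -> p + q * m + r * m ^ 2 <= p + q * c + r * c ^ 2.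
Proof.
  intros Hlh. destruct (continuity_ab_min (fun c => p + q * c + r * c ^ 2) lo hi Hlh) as [m [Hm Hb]].
  - intros c _. reg.
  - exists m. auto.
Qed.

Lemma argmin_extend (F : R -> R) lo hi : lo <= hi ->
  (exists m, hi <= m /\ forall c, hi <= c -> F m <= F c) ->
  (exists p q r, forall c, lo <= c <= hi -> F c = p + q * c + r * c ^ 2) ->
  exists m, lo <= m /\ forall c, lo <= c -> F m <= F c.
Proof.
  intros Hlh [m1 [Hm1 Hmin1]] [p [q [r Hquad]]].
  destruct (quadratic_attains_min p q r lo hi Hlh) as [m2 [Hm2 Hmin2]].
  assert (Hpiece : forall c, lo <= c <= hi -> F m2 <= F c).
  { intros c Hc. rewrite (Hquad m2 Hm2), (Hquad c Hc). apply Hmin2, Hc. }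
  destruct (Rle_dec (F m2) (F m1)) as [Hle|Hgt]; [exists m2|exists m1];
    (split; [lra|]); intros c Hc; destruct (Rle_dec hi c).
  - specialize (Hmin1 c r0). lra.
  - apply Hpiece. lra.
  - apply Hmin1; assumption.
  - specialize (Hpiece c ltac:(lra)). lra.
Qed.

Lemma piecewise_quadratic_attains_min (F : R -> R) (j : nat) (cs : nat -> R) :
  (1 <= j)%nat -> (forall k, (1 <= k < j)%nat -> cs (S k) < cs k) -> 0 < cs j ->
  (forall c c', cs 1%nat <= c -> cs 1%nat <= c' -> F c = F c') ->
  (forall k, (1 <= k < j)%nat ->
     exists p q r, forall c, cs (S k) <= c <= cs k -> F c = p + q * c + r * c ^ 2) ->
  (exists p q r, forall c, 0 <= c <= cs j -> F c = p + q * c + r * c ^ 2) ->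
  exists m, 0 <= m /\ forall c, 0 <= c -> F m <= F c.
Proof.
  intros Hj Hdec Hcj Htop Hmid Hbot.
  assert (Htail : forall k, (1 <= k <= j)%nat -> exists m, cs k <= m /\ forall c, cs k <= c -> F m <= F c).
  { induction k as [|k IH]; intros Hk; [lia|].
    destruct (Nat.eq_dec k 0) as [->|Hk0].
    - exists (cs 1%nat). split; [lra|]. intros c Hc. rewrite (Htop (cs 1%nat) c); lra.
    - apply (argmin_extend F (cs (S k)) (cs k)); [left; apply Hdec; lia|apply IH; lia|apply Hmid; lia]. }
  apply (argmin_extend F 0 (cs j)); [lra|apply Htail; lia|exact Hbot].
Qed.

Definition decreasing_enum (l : list R) (j : nat) (cs : nat -> R) : Prop :=
  (1 <= j <= length l)%nat /\ (forall k, (1 <= k < j)%nat -> cs (S k) < cs k) /\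
  (forall x, In x l -> exists k, (1 <= k <= j)%nat /\ x = cs k) /\
  (forall k, (1 <= k <= j)%nat -> In (cs k) l).

Lemma list_max_exists (l : list R) : l <> nil -> exists M, In M l /\ forall x, In x l -> x <= M.
Proof.
  induction l as [|y l IH]; intros Hne; [congruence|].
  destruct l as [|z l'].
  - exists y. split; [left; reflexivity|]. intros x [<-|[]]. lra.
  - destruct IH as [M [HM HMx]]; [congruence|]. exists (Rmax y M). split.
    + unfold Rmax. destruct (Rle_dec y M); [right|left]; auto.
    + intros x [<-|Hx]; [apply Rmax_l|]. eapply Rle_trans; [apply HMx, Hx|apply Rmax_r].
Qed.

(* List the maximum first, then (by induction on the length) the remaining distinct values. *)
Lemma decreasing_enum_exists (l : list R) : l <> nil -> exists j cs, decreasing_enum l j cs.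
Proof.
  remember (length l) as len eqn:Hlen. revert l Hlen.
  induction len as [len IH] using lt_wf_ind. intros l Hlen Hne.
  destruct (list_max_exists l Hne) as [M [HM HMx]].
  set (below := fun x => if Req_EM_T x M then false else true).
  assert (Hin' : forall x, In x (filter below l) <-> In x l /\ x <> M).
  { intros x. rewrite filter_In. unfold below. destruct (Req_EM_T x M); intuition congruence. }
  assert (Hshort : (length (filter below l) < len)%nat).
  { pose proof (filter_length_le below l). enough (length (filter below l) <> length l) by lia.
    intros Heq. apply filter_length_forallb, forallb_forall with (x := M) in Heq; [|exact HM].
    unfold below in Heq. destruct (Req_EM_T M M); congruence. }
  set (l' := filter below l) in *.
  destruct l' as [|z l''] eqn:El'.
  - exists 1%nat, (fun _ => M). destruct l as [|w l]; [congruence|].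
    repeat split; simpl; try lia.
    + intros x Hx. exists 1%nat. split; [lia|]. destruct (Req_EM_T x M) as [|Hxm]; [assumption|].
      exfalso. apply (proj2 (Hin' x)). auto.
    + intros k _. exact HM.
  - rewrite <- El' in *.
    destruct (IH (length l') Hshort l' eq_refl) as (j & cs & Hj & Hd & Hcov & Hmem);
      [rewrite El'; congruence|].
    assert (Hlt : forall k, (1 <= k <= j)%nat -> cs k < M).
    { intros k Hk. destruct (proj1 (Hin' (cs k)) (Hmem k Hk)) as [Hk' Hne'].
      destruct (HMx _ Hk'); [assumption|contradiction]. }
    exists (S j), (fun k => if Nat.leb k 1 then M else cs (pred k)). repeat split.
    + lia.
    + lia.
    + intros k Hk. destruct (Nat.leb_spec k 1), (Nat.leb_spec (S k) 1); try lia.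
      * replace k with 1%nat by lia. apply Hlt. lia.
      * destruct k as [|k]; [lia|]. apply Hd. lia.
    + intros x Hx. destruct (Req_EM_T x M) as [->|Hxm]; [exists 1%nat; split; [lia|reflexivity]|].
      destruct (Hcov x) as [k [Hk ->]]; [apply Hin'; auto|].
      exists (S k). split; [lia|]. destruct (Nat.leb_spec (S k) 1); [lia|reflexivity].
    + intros k Hk. destruct (Nat.leb_spec k 1); [exact HM|]. apply Hin', Hmem. lia.
Qed.

Lemma decreasing_enum_antitone l j cs : decreasing_enum l j cs ->
  forall k m, (1 <= k)%nat -> (k <= m)%nat -> (m <= j)%nat -> cs m <= cs k.
Proof.
  intros (_ & Hd & _) k m Hk Hkm. induction Hkm as [|m Hkm IH]; intros Hm; [lra|].
  pose proof (IH ltac:(lia)). pose proof (Hd m ltac:(lia)). lra.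
Qed.

Record toll_game (n : nat) (a b : nat -> R) (X : (nat -> R) -> nat -> R) (t : R -> nat -> R) : Prop := {
  game_links : (2 <= n)%nat;
  game_slopes : forall i, (i < n)%nat -> (0 < a i)%R;
  game_equilibria : is_eq_map n a b X;
  game_untolled_interior : forall i, (i < n)%nat -> (0 < X (fun _ => 0) i)%R;
  game_tolls : forall c, (0 <= c)%R -> forall s, inT n X c s <-> (forall i, (i < n)%nat -> s i = t c i) }.

(* All links carry flow at every [t c], so link 0 can be used to read off the common level. *)
Definition toll_level (a b : nat -> R) (X : (nat -> R) -> nat -> R) (t : R -> nat -> R) (c : R) : R :=
  lat a b 0 (X (t c) 0%nat) + t c 0%nat.

Definition toll_thresholds (n : nat) (a : nat -> R) (X : (nat -> R) -> nat -> R) (t : R -> nat -> R)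
    (th : nat -> R) : Prop :=
  forall i, (i < n)%nat -> 0 < th i /\ forall c, 0 <= c ->
    (t c i = c <-> c <= th i) /\ (th i <= c -> t c i = X (t c) i / toll_sensitivity n a i).

(* On a stretch of [c] where the links with [B i = true] are exactly the capped ones, the
   level of link [i] is [eff_slope B i * x_i + b_i], plus [c] if it is capped. *)
Definition eff_slope (n : nat) (a : nat -> R) (B : nat -> bool) (i : nat) : R :=
  if B i then a i else a i + 1 / toll_sensitivity n a i.

Definition cap_indicator (B : nat -> bool) (i : nat) : R := if B i then 1 else 0.

Definition piece_flow0 (n : nat) (a b : nat -> R) (B : nat -> bool) (i : nat) : R :=
  ((1 + sumN n (fun k => b k / eff_slope n a B k)) / sumN n (fun k => 1 / eff_slope n a B k) - b i)
    / eff_slope n a B i.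

Definition piece_flow_rate (n : nat) (a : nat -> R) (B : nat -> bool) (i : nat) : R :=
  (sumN n (fun k => cap_indicator B k / eff_slope n a B k) / sumN n (fun k => 1 / eff_slope n a B k)
    - cap_indicator B i) / eff_slope n a B i.

Lemma piece_flow_rate_none n a i : piece_flow_rate n a (fun _ => false) i = 0.
Proof.
  unfold piece_flow_rate, cap_indicator.
  rewrite (sumN_ext n _ (fun _ => 0)), sumN_0 by (intros; unfold Rdiv; ring).
  unfold Rdiv. ring.
Qed.

Lemma piece_flow_rate_ext n a B B' i : (forall k, (k < n)%nat -> B k = B' k) -> (i < n)%nat ->
  piece_flow_rate n a B i = piece_flow_rate n a B' i.
Proof.
  intros HB Hi.
  assert (E1 : sumN n (fun k => cap_indicator B k / eff_slope n a B k)
             = sumN n (fun k => cap_indicator B' k / eff_slope n a B' k)).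
  { apply sumN_ext. intros k Hk. unfold cap_indicator, eff_slope. rewrite (HB k Hk). reflexivity. }
  assert (E2 : sumN n (fun k => 1 / eff_slope n a B k) = sumN n (fun k => 1 / eff_slope n a B' k)).
  { apply sumN_ext. intros k Hk. unfold eff_slope. rewrite (HB k Hk). reflexivity. }
  unfold piece_flow_rate. rewrite E1, E2. unfold cap_indicator, eff_slope. rewrite (HB i Hi). reflexivity.
Qed.

(* The set [A_k] of the theorem: the links whose threshold is at least the breakpoint [cs k]. *)
Definition capped (th cs : nat -> R) (k i : nat) : bool :=
  match k with O => false | S _ => if Rle_dec (cs k) (th i) then true else false end.

Lemma capped_spec th cs k i : capped th cs k i = true <-> (k <> 0)%nat /\ cs k <= th i.
Proof.
  destruct k as [|k]; simpl; [split; [discriminate|lia]|].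
  destruct (Rle_dec (cs (S k)) (th i)) as [Hle|Hgt]; split.
  - intros _. split; [lia|exact Hle].
  - reflexivity.
  - discriminate.
  - intros [_ Hle]. contradiction.
Qed.

Section TollGame.

Context {n : nat} {a b : nat -> R} {X : (nat -> R) -> nat -> R} {t : R -> nat -> R}.
Hypothesis G : toll_game n a b X t.

Let Hn := game_links _ _ _ _ _ G.
Let Ha := game_slopes _ _ _ _ _ G.
Let HX := game_equilibria _ _ _ _ _ G.
Let HX0 := game_untolled_interior _ _ _ _ _ G.
Let Ht := game_tolls _ _ _ _ _ G.

Local Notation g := (toll_sensitivity n a).
Local Notation level := (toll_level a b X t).

Let g_pos i (Hi : (i < n)%nat) : 0 < g i := toll_sensitivity_pos n a Ha i Hn Hi.

Lemma eff_slope_pos B i : (i < n)%nat -> 0 < eff_slope n a B i.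
Proof.
  intros Hi. pose proof (Ha i Hi). pose proof (g_pos i Hi). unfold eff_slope.
  destruct (B i); [lra|]. assert (0 < 1 / g i) by (apply Rdiv_lt_0_compat; lra). lra.
Qed.

Lemma piece_flow_rate_all i : piece_flow_rate n a (fun _ => true) i = 0.
Proof.
  pose proof (inv_slope_sum_pos n a Ha ltac:(lia)) as HS.
  unfold piece_flow_rate, cap_indicator.
  change (sumN n (fun k => 1 / eff_slope n a (fun _ => true) k)) with (inv_slope_sum n a).
  replace (inv_slope_sum n a / inv_slope_sum n a) with 1 by (field; lra). unfold Rdiv. ring.
Qed.

Lemma X_wardrop tau : nonneg_tolls n tau -> wardrop n a b tau (X tau).
Proof. intros Htau. apply (HX tau Htau). reflexivity. Qed.

Lemma X_unique tau y : nonneg_tolls n tau -> wardrop n a b tau y ->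
  forall i, (i < n)%nat -> y i = X tau i.
Proof. intros Htau. apply (HX tau Htau). Qed.

Lemma t_in_T c : 0 <= c -> inT n X c (t c).
Proof. intros Hc. apply (Ht c Hc). reflexivity. Qed.

Lemma t_bounds c i : 0 <= c -> (i < n)%nat -> 0 <= t c i <= c.
Proof. intros Hc. exact (proj1 (t_in_T c Hc) i). Qed.

Lemma upd_t_nonneg c i s : 0 <= c -> 0 <= s -> nonneg_tolls n (upd (t c) i s).
Proof.
  intros Hc Hs k Hk. unfold upd. destruct (Nat.eqb k i); [exact Hs|]. exact (proj1 (t_bounds c k Hc Hk)).
Qed.

Lemma X_t_wardrop c : 0 <= c -> wardrop n a b (t c) (X (t c)).
Proof. intros Hc. apply X_wardrop. intros k Hk. exact (proj1 (t_bounds c k Hc Hk)). Qed.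

Lemma X_t0 i : (i < n)%nat -> X (t 0) i = X (fun _ => 0) i.
Proof.
  intros Hi. symmetry.
  apply X_unique; [intros k Hk; exact (proj1 (t_bounds 0 k (Rle_refl 0) Hk))| |exact Hi].
  apply (wardrop_tolls_ext n a b (fun _ => 0)).
  - intros k Hk. pose proof (t_bounds 0 k (Rle_refl 0) Hk). lra.
  - apply X_wardrop. intros k _. lra.
Qed.

(* If link [i] were empty at [t c], it could charge a small toll [s] without losing profit; it
   would stay empty, yet the level of the resulting equilibrium is at least the untolled
   level [a_i x_i(0) + b_i] of link [i], which exceeds [b_i + s]. *)
Lemma X_t_pos c i : 0 <= c -> (i < n)%nat -> 0 < X (t c) i.
Proof.
  intros Hc Hi. apply Rnot_le_lt. intros Hle.
  pose proof (X_t_wardrop c Hc) as Hwc.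
  assert (Hxi : X (t c) i = 0) by (pose proof (proj1 (proj1 Hwc) i Hi); lra).
  set (x0 := X (fun _ => 0)).
  pose proof (HX0 i Hi) as Hx0. fold x0 in Hx0. pose proof (Ha i Hi).
  destruct (Req_dec c 0) as [->|Hc0]; [rewrite X_t0 in Hxi by exact Hi; fold x0 in Hxi; lra|].
  set (s := Rmin c (a i * x0 i / 2)).
  assert (Hs : 0 < s <= c /\ s <= a i * x0 i / 2).
  { split; [split; [apply Rmin_glb_lt; nra|apply Rmin_l]|apply Rmin_r]. }
  set (tau := upd (t c) i s).
  assert (Htau : nonneg_tolls n tau) by (apply upd_t_nonneg; lra).
  pose proof (X_wardrop tau Htau) as Hw.
  assert (Hti : tau i = s) by (unfold tau, upd; rewrite Nat.eqb_refl; reflexivity).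
  assert (Hyi : X tau i = 0).
  { pose proof (proj2 (t_in_T c Hc) i Hi s ltac:(lra)) as Hp.
    unfold profit in Hp. fold tau in Hp. rewrite Hxi, Hti in Hp.
    pose proof (proj1 (proj1 Hw) i Hi). nra. }
  destruct (sumN_pos_inv n (X tau)) as [p [Hp Hyp]]; [rewrite (proj2 (proj1 Hw)); lra|].
  assert (Hw0 : wardrop n a b (fun _ => 0) x0) by (apply X_wardrop; intros k _; lra).
  pose proof (wardrop_level_le n a b Ha tau (fun _ => 0) (X tau) x0 p i Hw Hw0 Htau Hp Hi Hyp (Hx0)).
  pose proof (proj2 Hw p i Hp Hi Hyp). rewrite Hyi, Hti in *. unfold lat in *. lra.
Qed.

Lemma level_spec c i : 0 <= c -> (i < n)%nat -> lat a b i (X (t c) i) + t c i = level c.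
Proof.
  intros Hc Hi. unfold toll_level.
  apply (wardrop_level_eq n a b); [apply X_t_wardrop|exact Hi|lia|apply X_t_pos..]; auto; lia.
Qed.

(* Moving the own toll by [h] shifts link [i]'s flow by [- g i * h], so optimality of [t c i]
   compares [t x] with [(t + h) (x - g h)]. *)
Lemma profit_first_order c i : 0 <= c -> (i < n)%nat ->
  exists d, 0 < d /\ forall h, Rabs h <= d -> 0 <= t c i + h <= c ->
    h * (X (t c) i - g i * t c i - g i * h) <= 0.
Proof.
  intros Hc Hi. set (x := X (t c)).
  destruct (shift_flow_nonneg_near_0 n a Ha x i Hi (fun k Hk => X_t_pos c k Hc Hk)) as [d [Hd Hnn]].
  exists d. split; [exact Hd|]. intros h Hh Hth.
  set (tau := upd (t c) i (t c i + h)).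
  assert (Htau : nonneg_tolls n tau) by (apply upd_t_nonneg; lra).
  assert (HXi : X tau i = x i - g i * h).
  { rewrite <- (shift_flow_self n a Ha x i h ltac:(lia) Hi).
    symmetry. apply (X_unique tau); [exact Htau| |exact Hi].
    apply wardrop_shift_flow; auto; [apply X_t_wardrop; exact Hc|intros k Hk; apply X_t_pos; auto]. }
  assert (Hti : tau i = t c i + h) by (unfold tau, upd; rewrite Nat.eqb_refl; reflexivity).
  pose proof (proj2 (t_in_T c Hc) i Hi (t c i + h) Hth) as Hp.
  unfold profit in Hp. fold tau x in Hp. rewrite HXi, Hti in Hp. nra.
Qed.

Lemma toll_best_response c i : 0 <= c -> (i < n)%nat -> t c i = Rmin c (X (t c) i / g i).
Proof.
  intros Hc Hi. pose proof (g_pos i Hi) as Hg.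
  pose proof (t_bounds c i Hc Hi) as Hti. pose proof (X_t_pos c i Hc Hi) as Hx.
  destruct (profit_first_order c i Hc Hi) as [d [Hd Hfoc]].
  set (q := X (t c) i - g i * t c i) in *.
  assert (Hrise : t c i < c -> q <= 0).
  { intros Hlt. apply (le_0_of_forall_small_le q (g i) (Rmin d (c - t c i))); auto.
    - apply Rmin_glb_lt; lra.
    - intros h [Hh0 Hh]. pose proof (Rmin_l d (c - t c i)). pose proof (Rmin_r d (c - t c i)).
      specialize (Hfoc h ltac:(apply Rabs_le; lra) ltac:(lra)). nra. }
  assert (Hfall : 0 < t c i -> 0 <= q).
  { intros Hpos. enough (- q <= 0) by lra.
    apply (le_0_of_forall_small_le (- q) (g i) (Rmin d (t c i))); auto.
    - apply Rmin_glb_lt; lra.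
    - intros h [Hh0 Hh]. pose proof (Rmin_l d (t c i)). pose proof (Rmin_r d (t c i)).
      specialize (Hfoc (- h) ltac:(apply Rabs_le; lra) ltac:(lra)). nra. }
  assert (Eq : X (t c) i / g i = t c i + q / g i) by (unfold q; field; lra).
  rewrite Eq. destruct (Rlt_le_dec (t c i) c) as [Hlt|Hge].
  - assert (Hpos : 0 < t c i) by (pose proof (Hrise Hlt); unfold q in *; nra).
    assert (Hq0 : q = 0) by (pose proof (Hrise Hlt); pose proof (Hfall Hpos); lra).
    rewrite Hq0. unfold Rdiv. rewrite Rmult_0_l, Rplus_0_r, Rmin_right; lra.
  - assert (Hq : 0 <= q / g i).
    { destruct (Req_dec c 0) as [->|Hc0].
      - left. apply Rdiv_lt_0_compat; [unfold q|]; nra.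
      - apply Rle_mult_inv_pos; [apply Hfall|]; lra. }
    rewrite Rmin_left; lra.
Qed.

Lemma level_eq_min c i : 0 <= c -> (i < n)%nat ->
  a i * X (t c) i + b i + Rmin c (X (t c) i / g i) = level c.
Proof.
  intros Hc Hi. rewrite <- (level_spec c i Hc Hi), (toll_best_response c i Hc Hi). unfold lat. ring.
Qed.

Lemma level_nondecreasing c c' : 0 <= c -> c <= c' -> level c <= level c'.
Proof.
  intros Hc Hcc. apply Rnot_lt_le. intros Hlt. assert (Hc' : 0 <= c') by lra.
  assert (Hdown : forall k, (k < n)%nat -> X (t c') k < X (t c) k).
  { intros k Hk. apply Rnot_le_lt. intros Hle.
    pose proof (Rmin_div_le_compat c c' _ _ (g k) (g_pos k Hk) Hcc Hle).
    pose proof (level_eq_min c k Hc Hk). pose proof (level_eq_min c' k Hc' Hk). pose proof (Ha k Hk). nra. }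
  apply (feasible_not_dominated n (X (t c')) (X (t c)) 0);
    [apply X_t_wardrop..| |lia|apply Hdown; lia]; auto.
  intros k Hk. left. auto.
Qed.

Lemma level_lipschitz c c' : 0 <= c -> c <= c' -> level c' <= level c + (c' - c).
Proof.
  intros Hc Hcc. apply Rnot_lt_le. intros Hlt. assert (Hc' : 0 <= c') by lra.
  assert (Hup : forall k, (k < n)%nat -> X (t c) k < X (t c') k).
  { intros k Hk. apply Rnot_le_lt. intros Hle.
    pose proof (Rmin_div_le_shift c c' _ _ (g k) (g_pos k Hk) Hcc Hle).
    pose proof (level_eq_min c k Hc Hk). pose proof (level_eq_min c' k Hc' Hk). pose proof (Ha k Hk). nra. }
  apply (feasible_not_dominated n (X (t c)) (X (t c')) 0);
    [apply X_t_wardrop..| |lia|apply Hup; lia]; auto.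
  intros k Hk. left. auto.
Qed.

Let cap_margin i c := level c - (1 + a i * g i) * c - b i.

Lemma capped_iff_margin c i : 0 <= c -> (i < n)%nat -> (t c i = c <-> 0 <= cap_margin i c).
Proof.
  intros Hc Hi. pose proof (g_pos i Hi). pose proof (Ha i Hi). pose proof (X_t_pos c i Hc Hi).
  unfold cap_margin. rewrite (toll_best_response c i Hc Hi), <- (level_eq_min c i Hc Hi).
  set (u := X (t c) i / g i). replace (X (t c) i) with (g i * u) by (unfold u; field; lra).
  assert (0 < a i * g i) by (apply Rmult_lt_0_compat; lra).
  unfold Rmin. destruct (Rle_dec c u); split; intros; nra.
Qed.

Lemma uncapped_of_margin c i : 0 <= c -> (i < n)%nat -> cap_margin i c <= 0 -> t c i = X (t c) i / g i.
Proof.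
  intros Hc Hi. pose proof (g_pos i Hi). pose proof (Ha i Hi). pose proof (X_t_pos c i Hc Hi).
  unfold cap_margin. rewrite (toll_best_response c i Hc Hi), <- (level_eq_min c i Hc Hi).
  set (u := X (t c) i / g i). replace (X (t c) i) with (g i * u) by (unfold u; field; lra).
  assert (0 < a i * g i) by (apply Rmult_lt_0_compat; lra).
  unfold Rmin. destruct (Rle_dec c u); intros; nra.
Qed.

Lemma cap_margin_slope i : (i < n)%nat -> forall c c', 0 <= c -> c <= c' ->
  - (1 + a i * g i) * (c' - c) <= cap_margin i c' - cap_margin i c <= - (a i * g i) * (c' - c).
Proof.
  intros Hi c c' Hc Hcc.
  pose proof (level_nondecreasing c c' Hc Hcc). pose proof (level_lipschitz c c' Hc Hcc).
  unfold cap_margin. split; nra.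
Qed.

Lemma cap_margin_0_pos i : (i < n)%nat -> 0 < cap_margin i 0.
Proof.
  intros Hi. pose proof (g_pos i Hi). pose proof (Ha i Hi). pose proof (X_t_pos 0 i (Rle_refl 0) Hi).
  pose proof (level_eq_min 0 i (Rle_refl 0) Hi) as E.
  assert (0 < X (t 0) i / g i) by (apply Rdiv_lt_0_compat; lra).
  rewrite Rmin_left in E by lra. unfold cap_margin. rewrite <- E. nra.
Qed.

Lemma cap_threshold i : (i < n)%nat -> exists th, 0 < th /\ forall c, 0 <= c ->
  (t c i = c <-> c <= th) /\ (th <= c -> t c i = X (t c) i / g i).
Proof.
  intros Hi. pose proof (g_pos i Hi). pose proof (Ha i Hi).
  assert (HK : 0 < a i * g i) by (apply Rmult_lt_0_compat; lra).
  destruct (positive_root_of_slope_bounds (cap_margin i) (a i * g i) (1 + a i * g i) HK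
    (cap_margin_slope i Hi) (cap_margin_0_pos i Hi)) as [z [Hz Hroot]].
  exists z. split; [exact Hz|]. intros c Hc. split.
  - rewrite (capped_iff_margin c i Hc Hi). split; intros Hcz.
    + apply Rnot_lt_le. intros Hzc. pose proof (cap_margin_slope i Hi z c ltac:(lra) ltac:(lra)). nra.
    + pose proof (cap_margin_slope i Hi c z Hc Hcz). nra.
  - intros Hzc. apply uncapped_of_margin; auto. pose proof (cap_margin_slope i Hi z c ltac:(lra) Hzc). nra.
Qed.

Lemma toll_thresholds_exist : exists th, toll_thresholds n a X t th.
Proof. exact (finite_choice n _ cap_threshold). Qed.

(* Each level equation is linear in [x_i] and [c]; summing [x_i = (L - b_i - [i capped] c) / m_i]
   over the links determines the level [L]. *)
Lemma flow_affine_of_capped_set (B : nat -> bool) c : 0 <= c ->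
  (forall i, (i < n)%nat -> t c i = if B i then c else X (t c) i / g i) ->
  forall i, (i < n)%nat -> X (t c) i = piece_flow0 n a b B i + piece_flow_rate n a B i * c.
Proof.
  intros Hc HB. set (L := level c). set (m := eff_slope n a B).
  assert (Hx : forall i, (i < n)%nat -> X (t c) i = (L - b i - cap_indicator B i * c) / m i).
  { intros i Hi. pose proof (level_spec c i Hc Hi) as E. fold L in E. rewrite (HB i Hi) in E.
    pose proof (eff_slope_pos B i Hi). pose proof (g_pos i Hi).
    unfold m, eff_slope, cap_indicator, lat in *. rewrite <- E.
    destruct (B i); [field; lra|].
    replace (a i * X (t c) i + b i + X (t c) i / g i - b i - 0 * c) with (X (t c) i * (a i + 1 / g i))
      by (field; lra).
    unfold Rdiv. rewrite Rmult_assoc, Rinv_r, Rmult_1_r by lra. reflexivity. }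
  assert (HM : 0 < sumN n (fun k => 1 / m k)).
  { apply sumN_pos; [lia|]. intros k Hk. apply Rdiv_lt_0_compat; [lra|apply eff_slope_pos, Hk]. }
  assert (HL : L = (1 + sumN n (fun k => b k / m k) + c * sumN n (fun k => cap_indicator B k / m k))
                   / sumN n (fun k => 1 / m k)).
  { pose proof (proj2 (proj1 (X_t_wardrop c Hc))) as S1.
    rewrite (sumN_ext n _
      (fun k => L * (1 / m k) + -1 * (b k / m k) + - c * (cap_indicator B k / m k))) in S1.
    - rewrite !sumN_add, !sumN_scal in S1. field_simplify_eq; lra.
    - intros k Hk. rewrite (Hx k Hk). pose proof (eff_slope_pos B k Hk) as Hm. fold m in Hm. field. lra. }
  intros i Hi. rewrite (Hx i Hi), HL. pose proof (eff_slope_pos B i Hi) as Hm. fold m in Hm.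
  unfold piece_flow0, piece_flow_rate. fold m. field. split; lra.
Qed.

Section Breakpoints.

Context {th : nat -> R} {j : nat} {cs : nat -> R}.
Hypothesis Hth : toll_thresholds n a X t th.
Hypothesis Hcs : decreasing_enum (map th (seq 0 n)) j cs.

Local Notation A := (capped th cs).

Let j_pos : (1 <= j)%nat := proj1 (proj1 Hcs).
Let decrease := proj1 (proj2 Hcs).
Let antitone := decreasing_enum_antitone _ _ _ Hcs.

Lemma threshold_is_breakpoint i : (i < n)%nat -> exists m, (1 <= m <= j)%nat /\ th i = cs m.
Proof.
  intros Hi. apply (proj1 (proj2 (proj2 Hcs))). apply in_map, in_seq. lia.
Qed.

Lemma breakpoint_is_threshold k : (1 <= k <= j)%nat -> exists i, (i < n)%nat /\ cs k = th i.
Proof.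
  intros Hk. pose proof (proj2 (proj2 (proj2 Hcs)) k Hk) as Hin.
  apply in_map_iff in Hin as [i [Hi Hseq]]. apply in_seq in Hseq. exists i. split; [lia|auto].
Qed.

Lemma last_breakpoint_pos : 0 < cs j.
Proof.
  destruct (breakpoint_is_threshold j) as [i [Hi ->]]; [lia|].
  exact (proj1 (Hth i Hi)).
Qed.

Lemma capped_chain k : (k < j)%nat ->
  (forall i, (i < n)%nat -> A k i = true -> A (S k) i = true) /\
  (exists i, (i < n)%nat /\ A (S k) i = true /\ ~ A k i = true).
Proof.
  intros Hk. split.
  - intros i Hi. rewrite !capped_spec. intros [Hk0 Hle].
    pose proof (decrease k ltac:(lia)). split; [lia|lra].
  - destruct (breakpoint_is_threshold (S k)) as [i [Hi E]]; [lia|].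
    exists i. rewrite !capped_spec. split; [exact Hi|]. split; [split; [lia|lra]|].
    intros [Hk0 Hle]. pose proof (decrease k ltac:(lia)). lra.
Qed.

Lemma capped_last i : (i < n)%nat -> A j i = true.
Proof.
  intros Hi. apply capped_spec. destruct (threshold_is_breakpoint i Hi) as [m [Hm ->]].
  split; [lia|apply antitone; lia].
Qed.

Lemma toll_capped_iff k : (k < j)%nat -> forall c, 0 <= c -> cs (S k) < c -> (k = O \/ c <= cs k) ->
  forall i, (i < n)%nat -> (t c i = c <-> A k i = true).
Proof.
  intros Hk c Hc Hlo Hhi i Hi. rewrite (proj1 (proj2 (Hth i Hi) c Hc)), capped_spec.
  destruct (threshold_is_breakpoint i Hi) as [m [Hm ->]]. split.
  - intros Hcm. assert (Hmk : (m <= k)%nat).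
    { apply Nat.nlt_ge. intros Hkm. pose proof (antitone (S k) m ltac:(lia) Hkm ltac:(lia)). lra. }
    split; [lia|apply antitone; lia].
  - intros [Hk0 Hle]. destruct Hhi as [|Hhi]; [contradiction|lra].
Qed.

Lemma toll_capped_below c : 0 <= c <= cs j -> forall i, (i < n)%nat -> t c i = c.
Proof.
  intros Hc i Hi. apply (proj2 (Hth i Hi) c (proj1 Hc)).
  destruct (threshold_is_breakpoint i Hi) as [m [Hm ->]].
  pose proof (antitone m j ltac:(lia) ltac:(lia) ltac:(lia)). lra.
Qed.

(* At the left end [c = cs (S k)] the newly capped links satisfy both descriptions. *)
Lemma toll_on_piece k c : (k <= j)%nat -> 0 <= c -> ((k < j)%nat -> cs (S k) <= c) ->
  (k = O \/ c <= cs k) -> forall i, (i < n)%nat -> t c i = if A k i then c else X (t c) i / g i.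
Proof.
  intros Hk Hc Hlo Hhi i Hi. destruct (Hth i Hi) as [_ Hti]. destruct (Hti c Hc) as [Hcap Hunc].
  destruct (threshold_is_breakpoint i Hi) as [m [Hm E]]. rewrite E in *.
  destruct (A k i) eqn:HA.
  - apply capped_spec in HA as [Hk0 Hle]. apply Hcap. destruct Hhi; [contradiction|lra].
  - apply Hunc. destruct (Nat.le_gt_cases m k) as [Hmk|Hkm].
    + exfalso. assert (Hk0 : k <> O) by lia. apply Bool.diff_false_true. rewrite <- HA.
      apply capped_spec. split; [exact Hk0|rewrite E; apply antitone; lia].
    + pose proof (antitone (S k) m ltac:(lia) Hkm ltac:(lia)). specialize (Hlo ltac:(lia)). lra.
Qed.

Lemma flow_on_piece k c : (k <= j)%nat -> 0 <= c -> ((k < j)%nat -> cs (S k) <= c) ->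
  (k = O \/ c <= cs k) ->
  forall i, (i < n)%nat -> X (t c) i = piece_flow0 n a b (A k) i + piece_flow_rate n a (A k) i * c.
Proof.
  intros Hk Hc Hlo Hhi. apply flow_affine_of_capped_set; [exact Hc|]. apply toll_on_piece; assumption.
Qed.

Lemma first_breakpoint_pos : 0 < cs 1%nat.
Proof. pose proof last_breakpoint_pos. pose proof (antitone 1 j ltac:(lia) ltac:(lia) ltac:(lia)). lra. Qed.

Lemma flow_affine_top : exists u v : nat -> R, forall c, cs 1%nat <= c ->
  forall i, (i < n)%nat -> X (t c) i = u i + v i * c.
Proof.
  do 2 eexists. intros c Hc. pose proof first_breakpoint_pos.
  apply (flow_on_piece 0); [lia|lra|intros _; exact Hc|left; reflexivity].
Qed.

Lemma flow_affine_mid k : (1 <= k < j)%nat -> exists u v : nat -> R, forall c, cs (S k) <= c <= cs k ->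
  forall i, (i < n)%nat -> X (t c) i = u i + v i * c.
Proof.
  intros Hk. do 2 eexists. intros c Hc. pose proof last_breakpoint_pos.
  pose proof (antitone (S k) j ltac:(lia) ltac:(lia) ltac:(lia)).
  apply (flow_on_piece k); [lia|lra|intros _; lra|right; lra].
Qed.

Lemma flow_affine_bottom : exists u v : nat -> R, forall c, 0 <= c <= cs j ->
  forall i, (i < n)%nat -> X (t c) i = u i + v i * c.
Proof.
  do 2 eexists. intros c Hc. apply (flow_on_piece j); [lia|lra|lia|right; lra].
Qed.

Lemma flow_constant_top c c' : cs 1%nat <= c -> cs 1%nat <= c' ->
  forall i, (i < n)%nat -> X (t c) i = X (t c') i.
Proof.
  intros Hc Hc' i Hi. pose proof first_breakpoint_pos.
  rewrite (flow_on_piece 0 c), (flow_on_piece 0 c'); try (lia || lra || (left; reflexivity)).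
  simpl. rewrite piece_flow_rate_none. ring.
Qed.

Lemma flow_untolled_bottom c : 0 <= c <= cs j -> forall i, (i < n)%nat -> X (t c) i = X (fun _ => 0) i.
Proof.
  intros Hc i Hi. pose proof last_breakpoint_pos. rewrite <- (X_t0 i Hi).
  rewrite (flow_on_piece j c), (flow_on_piece j 0); try (lia || lra || (right; lra)).
  rewrite (piece_flow_rate_ext n a (A j) (fun _ => true) i capped_last Hi), piece_flow_rate_all. ring.
Qed.

End Breakpoints.

End TollGame.

Theorem mainTheorem7
  (n : nat) (a b : nat -> R)
  (X : (nat -> R) -> (nat -> R)) (t : R -> (nat -> R))
  (Hn : (2 <= n)%nat)
  (Ha : forall i, (i < n)%nat -> 0 < a i)
  (Hb : forall i, (i < n)%nat -> 0 <= b i)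
  (HX : is_eq_map n a b X)
  (HX0 : forall i, (i < n)%nat -> 0 < X (fun _ => 0) i)
  (Ht : forall c, 0 <= c ->
          forall s, inT n X c s <-> (forall i, (i < n)%nat -> s i = t c i)) :
  exists (j : nat) (cs : nat -> R) (A : nat -> nat -> Prop),
    (1 <= j <= n)%nat /\
    (forall k, (1 <= k < j)%nat -> cs (S k) < cs k) /\
    0 < cs j /\
    (forall i, (i < n)%nat -> ~ A O i) /\
    (forall k, (k < j)%nat ->
       (forall i, (i < n)%nat -> A k i -> A (S k) i) /\
       (exists i, (i < n)%nat /\ A (S k) i /\ ~ A k i)) /\
    (forall i, (i < n)%nat -> A j i) /\
    (* A(c) = A_k on (c_{k+1}, c_k] ∩ R_+, with c_0 = infinity *)
    (forall k, (k < j)%nat -> forall c, 0 <= c -> cs (S k) < c ->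
       (k = O \/ c <= cs k) ->
       forall i, (i < n)%nat -> (t c i = c <-> A k i)) /\
    (* A(c) = N on [0, c_j] *)
    (forall c, 0 <= c <= cs j -> forall i, (i < n)%nat -> t c i = c) /\
    (* on [c_1, infinity): x affine, C(x) polynomial of degree <= 2 *)
    (exists u v : nat -> R, forall c, cs 1%nat <= c ->
       forall i, (i < n)%nat -> X (t c) i = u i + v i * c) /\
    (exists p q r : R, forall c, cs 1%nat <= c ->
       cost n a b (X (t c)) = p + q * c + r * c ^ 2) /\
    (* on [c_{k+1}, c_k], k = 1..j-1 *)
    (forall k, (1 <= k < j)%nat ->
       (exists u v : nat -> R, forall c, cs (S k) <= c <= cs k ->
          forall i, (i < n)%nat -> X (t c) i = u i + v i * c) /\
       (exists p q r : R, forall c, cs (S k) <= c <= cs k ->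
          cost n a b (X (t c)) = p + q * c + r * c ^ 2)) /\
    (* on [0, c_j] *)
    (exists u v : nat -> R, forall c, 0 <= c <= cs j ->
       forall i, (i < n)%nat -> X (t c) i = u i + v i * c) /\
    (exists p q r : R, forall c, 0 <= c <= cs j ->
       cost n a b (X (t c)) = p + q * c + r * c ^ 2) /\
    (* x(c) constant on [c_1, infinity) *)
    (forall c c', cs 1%nat <= c -> cs 1%nat <= c' ->
       forall i, (i < n)%nat -> X (t c) i = X (t c') i) /\
    (* x(c) = x(0) on [0, c_j] *)
    (forall c, 0 <= c <= cs j ->
       forall i, (i < n)%nat -> X (t c) i = X (fun _ => 0) i) /\
    (* the minimum of C(x(c)) over R_+ is attained *)
    (exists cstar, 0 <= cstar /\
       forall c, 0 <= c -> cost n a b (X (t cstar)) <= cost n a b (X (t c))).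
Proof.
  assert (G : toll_game n a b X t) by (constructor; assumption).
  destruct (toll_thresholds_exist G) as [th Hth].
  destruct (decreasing_enum_exists (map th (seq 0 n))) as (j & cs & Hcs);
    [destruct n; [lia|discriminate]|].
  pose proof Hcs as (Hj & Hdec & _). rewrite length_map, length_seq in Hj.
  exists j, cs, (fun k i => capped th cs k i = true).
  split; [lia|]. split; [exact Hdec|]. split; [exact (last_breakpoint_pos G Hth Hcs)|].
  split; [intros i _ H0; discriminate H0|].
  split; [exact (capped_chain G Hcs)|]. split; [exact (capped_last G Hcs)|].
  split; [exact (toll_capped_iff G Hth Hcs)|]. split; [exact (toll_capped_below G Hth Hcs)|].
  split; [exact (flow_affine_top G Hth Hcs)|].
  split; [exact (cost_quadratic_of_affine n a b _ _ (flow_affine_top G Hth Hcs))|].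
  split.
  { intros k Hk. split; [exact (flow_affine_mid G Hth Hcs k Hk)|].
    exact (cost_quadratic_of_affine n a b _ _ (flow_affine_mid G Hth Hcs k Hk)). }
  split; [exact (flow_affine_bottom G Hth Hcs)|].
  split; [exact (cost_quadratic_of_affine n a b _ _ (flow_affine_bottom G Hth Hcs))|].
  split; [exact (flow_constant_top G Hth Hcs)|]. split; [exact (flow_untolled_bottom G Hth Hcs)|].
  apply (piecewise_quadratic_attains_min (fun c => cost n a b (X (t c))) j cs);
    [lia|exact Hdec|exact (last_breakpoint_pos G Hth Hcs)| | |].
  - intros c c' Hc Hc'. apply cost_ext. exact (flow_constant_top G Hth Hcs c c' Hc Hc').
  - intros k Hk. exact (cost_quadratic_of_affine n a b _ _ (flow_affine_mid G Hth Hcs k Hk)).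
  - exact (cost_quadratic_of_affine n a b _ _ (flow_affine_bottom G Hth Hcs)).
Qed.
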